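(* Let $0<\alpha<d$, $1\leq p<d/\alpha$, $f\in L^p(\mathbb{R}^d)$, and $\varepsilon>0$. Then there is a subset $\widetilde{\mathcal{Q}}_\alpha\subset\mathcal{Q}_\alpha$ such that for each $Q\in\mathcal{Q}_\alpha$ with $\ell(Q)^\alpha f_Q>\varepsilon$ there is $P\in\widetilde{\mathcal{Q}}_\alpha$ with $Q\subset\operatorname{prt}(P)$ and $f_Q\leq 2^d f_P$. Furthermore, for any two $Q,P\in\widetilde{\mathcal{Q}}_\alpha$ at least one of the following holds: (1) $\operatorname{prt}(Q)=\operatorname{prt}(P)$; (2) $\operatorname{prt}(Q)\cap\operatorname{prt}(P)=\emptyset$; (3) $f_Q/f_P\notin(2^{-d},2^d)$.
   Context: Dyadic cubes are $[x_1,x_1+2^n)\times\dots\times[x_d,x_d+2^n)$, $n\in\mathbb{Z}$, $x_i\in2^n\mathbb{Z}$; $\ell(Q)$ is the sidelength, $\operatorname{prt}(Q)$ is the dyadic parent of $Q$ (the dyadic cube of sidelength $2\ell(Q)$ containing $Q$), and $f_Q=\frac1{|Q|}\int_Q|f|$. $\mathcal{Q}_\alpha$ is the set of dyadic cubes $Q$ such that $\ell(P)^\alpha f_P<\ell(Q)^\alpha f_Q$ for every dyadic cube $P\supsetneq Q$. *)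

From HB Require Import structures.
From mathcomp Require Import all_boot all_order all_algebra.
From mathcomp Require Import all_classical all_reals all_analysis.
Set Implicit Arguments. Unset Strict Implicit. Unset Printing Implicit Defensive.
Import Order.TTheory GRing.Theory Num.Theory.
Local Open Scope classical_set_scope.
Local Open Scope ring_scope.

(* Points of R^d are d-tuples of reals (product Borel sigma-algebra). *)

(* A dyadic cube is indexed by its generation n : int (side 2^n) and the
   integer coordinates k (so x_i = k_i 2^n). *)
Definition dyadic (d : nat) : Type := (int * {ffun 'I_d -> int})%type.

Definition side {R : realType} {d : nat} (Q : dyadic d) : R := (2%:R : R) ^ Q.1.

Definition cube {R : realType} {d : nat} (Q : dyadic d) : set (d.-tuple R) :=
  [set x | forall i : 'I_d,
     (Q.2 i)%:~R * side Q <= tnth x i < ((Q.2 i) + 1)%:~R * side Q].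

Definition prt {d : nat} (Q : dyadic d) : dyadic d :=
  (Q.1 + 1, [ffun i => ((Q.2 i) %/ 2)%Z]).

Definition box {R : realType} {d : nat} (a b : d.-tuple R) : set (d.-tuple R) :=
  [set x | forall i : 'I_d, tnth a i <= tnth x i < tnth b i].

(* mu is Lebesgue measure on R^d: it gives every box its volume.  On the
   (product Borel) sigma-algebra this determines mu uniquely. *)
Definition is_lebesgue {R : realType} {d : nat}
  (mu : {measure set (d.-tuple R) -> \bar R}) : Prop :=
  forall a b : d.-tuple R, (forall i, tnth a i <= tnth b i) ->
    mu (box a b) = (\prod_(i < d) (tnth b i - tnth a i))%:E.

Definition avg {R : realType} {d : nat}
  (mu : {measure set (d.-tuple R) -> \bar R}) (f : d.-tuple R -> R)
  (Q : dyadic d) : R :=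
  fine (\int[mu]_(x in cube Q) (`|f x|)%:E)%E / fine (mu (cube Q)).

Definition Qalpha {R : realType} {d : nat}
  (mu : {measure set (d.-tuple R) -> \bar R}) (f : d.-tuple R -> R)
  (alpha : R) : set (dyadic d) :=
  [set Q | forall P : dyadic d,
     @cube R d Q `<=` cube P -> cube P <> cube Q :> set (d.-tuple R) ->
     side P `^ alpha * avg mu f P < side Q `^ alpha * avg mu f Q].

From HB Require Import structures.
From mathcomp Require Import all_boot all_order all_algebra.
From mathcomp Require Import all_classical all_reals all_analysis.
From mathcomp Require Import measurable_realfun.
From mathcomp Require Import ring.
Import Order.TTheory GRing.Theory Num.Theory.
Local Open Scope classical_set_scope.
Local Open Scope ring_scope.

(* Splitting |f| at height t = l(Q)^(-d/p) and using the finiteness of the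
   L^p norm gives f_Q <= (1 + ||f||_p^p) l(Q)^(-d/p), so l(Q)^alpha f_Q <=
   C l(Q)^(alpha - d/p); since alpha < d/p, the cubes with l(Q)^alpha f_Q > eps
   have bounded generation.  Scan them from the largest generation down and
   keep a cube P unless prt P lies strictly inside prt P' for an already kept
   P' with f_P / f_P' in (2^-d, 2^d).  A discarded cube Q then lies in such a
   prt P' with f_Q <= 2^d f_P'.  Dyadic cubes that meet are nested, so two
   kept cubes have equal, disjoint or strictly nested parents, and in the
   nested case the smaller one was kept only because the averages are far
   apart. *)

Section DyadicGeometry.
Variables (R : realType) (d : nat).
Implicit Types (A B Q : dyadic d).

Lemma side_gt0 Q : 0 < side Q :> R.
Proof. by rewrite /side exprz_gt0. Qed.

Lemma side_gen_addn Q (j : nat) :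
  (2%:R : R) ^ (Q.1 + j%:Z) = side Q * (2 ^+ j : int)%:~R.
Proof. by rewrite expfzDr ?pnatr_eq0 // exprnP rmorphXn /= -exprnP. Qed.

Lemma side_prt Q : side (prt Q) = side Q * 2 :> R.
Proof. by rewrite /side /= (side_gen_addn Q 1) expr1. Qed.

Lemma dyadic_itv_sub {s x y : R} {k m M : int} : 0 < s ->
  k%:~R * s <= x < (k + 1)%:~R * s ->
  m%:~R * (s * M%:~R) <= x < (m + 1)%:~R * (s * M%:~R) ->
  k%:~R * s <= y < (k + 1)%:~R * s ->
  m%:~R * (s * M%:~R) <= y < (m + 1)%:~R * (s * M%:~R).
Proof.
move=> s0 /andP[kx xk] /andP[mx xm] /andP[ky yk].
have ltz_of (a b : int) : a%:~R * s < b%:~R * s -> a < b.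
  by rewrite ltr_pM2r // ltr_int.
have mulsM (a : int) : a%:~R * (s * M%:~R) = (a * M)%:~R * s :> R.
  by rewrite intrM; ring.
rewrite !mulsM in mx xm *.
have mMk : m * M <= k by rewrite -ltzD1; apply: ltz_of; apply: le_lt_trans mx xk.
have kmM : k + 1 <= (m + 1) * M.
  by rewrite lezD1; apply: ltz_of; apply: le_lt_trans kx xm.
apply/andP; split.
  by apply: le_trans ky; rewrite ler_pM2r // ler_int.
by apply: lt_le_trans yk _; rewrite ler_pM2r // ler_int.
Qed.

Lemma meet_cube_sub A B : A.1 <= B.1 ->
  @cube R d A `&` cube B !=set0 -> @cube R d A `<=` cube B.
Proof.
move=> leAB [x [xA xB]] y yA i.
have [j hj] : exists j : nat, B.1 = A.1 + j%:Z.
  by exists `|B.1 - A.1|%N; rewrite gez0_abs ?subr_ge0 //; ring.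
move: (xB i); rewrite /side hj side_gen_addn -/(side A) => xBi.
exact: dyadic_itv_sub (side_gt0 A) (xA i) xBi (yA i).
Qed.

Definition low_corner Q : d.-tuple R := [tuple (Q.2 i)%:~R * side Q | i < d].
Definition high_corner Q : d.-tuple R := [tuple (Q.2 i + 1)%:~R * side Q | i < d].

Lemma cube_box Q : cube Q = box (low_corner Q) (high_corner Q).
Proof. by apply/seteqP; split => x xQ i; move: (xQ i); rewrite /= !tnth_mktuple. Qed.

Lemma cube_low_corner Q : cube Q (low_corner Q).
Proof.
by move=> i; rewrite tnth_mktuple lexx ltr_pM2r ?side_gt0 // ltr_int ltzD1 lexx.
Qed.

Lemma cube_sub_prt Q : @cube R d Q `<=` cube (prt Q).
Proof.
apply: meet_cube_sub; first by rewrite /= lerDl.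
exists (low_corner Q); split; first exact: cube_low_corner.
move=> i; rewrite tnth_mktuple side_prt /= ffunE.
set k := Q.2 i; have hk := divz_eq k 2.
have lo : (k %/ 2)%Z * 2 <= k by rewrite {2}hk lerDl modz_ge0.
have hi : k < ((k %/ 2)%Z + 1) * 2 by rewrite {1}hk mulrDl mul1r ltrD2l ltz_pmod.
have e (a : int) : a%:~R * (side Q * 2) = (a * 2)%:~R * side Q :> R.
  by rewrite intrM; ring.
by rewrite !e ler_pM2r ?ltr_pM2r ?side_gt0 // ler_int ltr_int lo hi.
Qed.

Lemma cube_proper_gen_lt A B : @cube R d A `<` cube B -> A.1 < B.1.
Proof.
move=> [sAB nBA]; rewrite ltNge; apply/negP => leBA; apply: nBA.
apply: meet_cube_sub leBA _.
by exists (low_corner A); split; [apply: sAB|]; apply: cube_low_corner.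
Qed.

Lemma meet_cube_proper A B : A.1 <= B.1 -> @cube R d A `&` cube B !=set0 ->
  @cube R d A <> cube B -> @cube R d A `<` cube B.
Proof.
move=> leAB meetAB neAB; rewrite properEneq; split; first exact/eqP.
exact: meet_cube_sub.
Qed.

Lemma cube_trichotomy A B :
  [\/ @cube R d A = cube B, @cube R d A `&` cube B = set0,
      @cube R d A `<` cube B | @cube R d B `<` cube A].
Proof.
have [meetAB|/nonemptyPn] := pselect (@cube R d A `&` cube B !=set0); last exact: Or42.
have [eqAB|neAB] := pselect (@cube R d A = cube B); first exact: Or41.
have [leAB|/ltW leBA] := leP A.1 B.1; first exact/Or43/meet_cube_proper.
apply/Or44/meet_cube_proper => //; first by rewrite setIC.
by move=> /esym.
Qed.

End DyadicGeometry.

Section Selection.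
Context {R : realType} {d : nat}.
Variables (S : set (dyadic d)) (g : dyadic d -> R) (N : int).
Hypothesis g_gt0 : forall P, S P -> 0 < g P.
Hypothesis gen_le : forall P, S P -> P.1 <= N.

Definition depth (P : dyadic d) : nat := `|N - P.1|%N.

Definition prt_proper (P P' : dyadic d) := @cube R d (prt P) `<` cube (prt P').

Definition far (P P' : dyadic d) := ~ (2%:R ^- d < g P / g P' < 2%:R ^+ d).

Fixpoint selected_before (k : nat) : set (dyadic d) :=
  if k is k'.+1 then
    selected_before k' `|` [set P | [/\ S P, depth P = k' &
      forall P', selected_before k' P' -> prt_proper P P' -> far P P']]
  else set0.

Definition selected (P : dyadic d) :=
  S P /\ forall P', selected_before (depth P) P' -> prt_proper P P' -> far P P'.

Lemma selected_beforeP k P : selected_before k P <-> (depth P < k)%N /\ selected P.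
Proof.
elim: k P => [|k IH] P /=; first by split => // -[].
split.
  case => [/IH [lt selP]|[SP <- farP]]; first by split => //; apply: ltnW.
  by split.
move=> [+ [SP farP]]; rewrite ltnS leq_eqVlt => /orP[/eqP eqk|lt].
  by right; split => //; rewrite -eqk.
by left; apply/IH.
Qed.

Lemma depth_lt P P' : S P -> S P' -> prt_proper P P' -> (depth P' < depth P)%N.
Proof.
move=> SP SP' /cube_proper_gen_lt /=; rewrite ltrD2r => lt.
rewrite /depth -ltz_nat !gez0_abs ?subr_ge0 ?gen_le //.
by rewrite ltrD2l ltrN2.
Qed.

Lemma far_sym P P' : S P -> S P' -> far P P' -> far P' P.
Proof.
move=> SP SP' farP near; apply: farP.
have gP := g_gt0 _ SP; have gP' := g_gt0 _ SP'.
rewrite -[g P / g P']invf_div.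
have r_gt0 : 0 < g P' / g P by rewrite divr_gt0.
move: near => /andP[lo hi]; apply/andP; split.
  by rewrite ltf_pV2 ?posrE ?exprn_gt0.
by rewrite -[X in _ < X]invrK ltf_pV2 ?posrE ?invr_gt0 ?exprn_gt0.
Qed.

Lemma selected_cover Q : S Q -> exists2 P, selected P &
  @cube R d Q `<=` cube (prt P) /\ g Q <= 2%:R ^+ d * g P.
Proof.
move=> SQ; have gQ := g_gt0 _ SQ.
have [selQ|] := pselect (selected Q).
  exists Q => //; split; first exact: cube_sub_prt.
  by rewrite ler_peMl ?(ltW gQ) // exprn_ege1 // ler1n.
move=> /not_andP[//|/existsNP[P /not_implyP[/selected_beforeP[_ selP]]]].
move=> /not_implyP[properQP /contrapT /andP[_ hi]].
exists P => //; split.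
  by move=> x /cube_sub_prt; apply: properQP.1.
by rewrite -ler_pdivrMr ?g_gt0 ?ltW //; case: selP.
Qed.

Lemma selected_separated Q P : selected Q -> selected P ->
  [\/ @cube R d (prt Q) = cube (prt P),
      @cube R d (prt Q) `&` cube (prt P) = set0 | far Q P].
Proof.
move=> selQ selP; have [SQ SP] := (selQ.1, selP.1).
have [||QP|PQ] := cube_trichotomy R d (prt Q) (prt P).
- exact: Or31.
- exact: Or32.
- apply/Or33/selQ.2 => //; apply/selected_beforeP; split => //.
  exact: depth_lt.
- apply/Or33/far_sym/selP.2 => //; apply/selected_beforeP; split => //.
  exact: depth_lt.
Qed.

End Selection.

Lemma measurable_cube (R : realType) (d : nat) (Q : dyadic d) :
  measurable (@cube R d Q).
Proof.
have -> : @cube R d Q = \bigcap_(i in [set: 'I_d])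
    ((fun x => tnth x i) @^-1` `[(Q.2 i)%:~R * side Q, (Q.2 i + 1)%:~R * side Q[).
  apply/seteqP; split => x xQ i; first by move=> _; rewrite /= in_itv; apply: xQ.
  by have := xQ i I; rewrite /= in_itv.
apply: fin_bigcap_measurable; first exact: finite_finset.
move=> i _; rewrite -[X in measurable X]setTI.
exact: measurable_tnth measurableT _ (measurable_itv _).
Qed.

Lemma le_cutoff_powR (R : realType) (p t y : R) : 1 <= p -> 0 < t ->
  y <= t + t `^ (1 - p) * y `^ p.
Proof.
move=> p1 t0; have [yt|ty] := leP y t.
  by apply: (le_trans yt); rewrite lerDl mulr_ge0 // powR_ge0.
have y_gt0 : 0 < y by apply: lt_trans ty.
rewrite /powR !gt_eqF //.
have y_split : y = expR ((1 - p) * ln y) * expR (p * ln y).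
  by rewrite -expRD -mulrDl subrK mul1r lnK.
have : y <= expR ((1 - p) * ln t) * expR (p * ln y).
  rewrite {1}y_split ler_pM2r ?expR_gt0 // ler_expR.
  by rewrite ler_wnM2l ?subr_le0 // ler_ln ?posrE // ltW.
by move/le_trans; apply; rewrite lerDr ltW.
Qed.

Section CubeAverages.
Context {R : realType} {d : nat} {mu : {measure set (d.-tuple R) -> \bar R}}.
Context {f : d.-tuple R -> R} {p J : R}.
Hypothesis mu_lebesgue : is_lebesgue mu.
Hypothesis mf : measurable_fun setT f.
Hypothesis p_ge1 : 1 <= p.
Hypothesis int_powR_norm : (\int[mu]_x (`|f x| `^ p)%:E)%E = J%:E.

Lemma measure_cube (Q : dyadic d) : mu (cube Q) = (side Q ^+ d)%:E.
Proof.
rewrite cube_box mu_lebesgue => [|i]; last first.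
  by rewrite !tnth_mktuple ler_pM2r ?side_gt0 // ler_int lerDl.
congr EFin; rewrite (eq_bigr (fun=> side Q)) ?prodr_const ?card_ord // => i _.
by rewrite !tnth_mktuple intrD; ring.
Qed.

Lemma integral_cube_le (Q : dyadic d) (t : R) : 0 < t ->
  (\int[mu]_(x in cube Q) (`|f x|)%:E <= (t * side Q ^+ d + t `^ (1 - p) * J)%:E)%E.
Proof.
move=> t_gt0; have mQ := measurable_cube R d Q.
set c := t `^ (1 - p); have c_ge0 : 0 <= c by apply: powR_ge0.
have mabs : measurable_fun setT (fun x => `|f x|).
  exact: measurableT_comp (@normr_measurable R setT) mf.
have mpow : measurable_fun setT (EFin \o (fun x => `|f x| `^ p)).
  by apply/measurable_EFinP; exact: measurableT_comp (measurable_powR p) mabs.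
have mpowQ : measurable_fun (cube Q) (EFin \o (fun x => `|f x| `^ p)).
  exact: measurable_funS mpow.
have mcpow : measurable_fun (cube Q) (fun x => c%:E * (`|f x| `^ p)%:E)%E.
  exact: emeasurable_funM (measurable_cst _) mpowQ.
apply: (@le_trans _ _ (\int[mu]_(x in cube Q) (t%:E + c%:E * (`|f x| `^ p)%:E))%E).
  apply: ge0_le_integral => //.
  - by apply/measurable_EFinP; apply: measurable_funS mabs.
  - exact: emeasurable_funD (measurable_cst _) mcpow.
  - by move=> x _; rewrite -EFinM -EFinD lee_fin le_cutoff_powR.
rewrite ge0_integralD //; first last.
- by move=> x _; rewrite mule_ge0 // lee_fin powR_ge0.
- by move=> x _; rewrite lee_fin ltW.
rewrite integral_cst // ge0_integralZl_EFin // measure_cube EFinD EFinM.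
rewrite leeD // EFinM lee_wpmul2l ?lee_fin // -int_powR_norm.
by apply: ge0_subset_integral => // x _; rewrite lee_fin powR_ge0.
Qed.

Lemma avg_le (Q : dyadic d) (t : R) : 0 < t ->
  avg mu f Q <= t + t `^ (1 - p) * J / side Q ^+ d.
Proof.
move=> t0; rewrite /avg measure_cube /=.
have sd_gt0 : 0 < side Q ^+ d :> R by rewrite exprn_gt0 // side_gt0.
have := integral_cube_le Q t t0.
have := integral_ge0 mu (f := fun x => (`|f x|)%:E)
  (fun x (_ : cube Q x) => normr_ge0 (f x)).
case: (\int[mu]_(x in _) _)%E => [r||] //= r0 rle.
by rewrite ler_pdivrMr // mulrDl divfK ?gt_eqF // [t * _]mulrC -lee_fin.
Qed.

Lemma scaled_avg_le (Q : dyadic d) (alpha : R) :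
  side Q `^ alpha * avg mu f Q <= (1 + J) * side Q `^ (alpha - d%:R / p).
Proof.
have p_neq0 : p != 0 by rewrite gt_eqF // (lt_le_trans ltr01).
set s := side Q; have s_gt0 : 0 < s by rewrite side_gt0.
have powRD_s a b : s `^ (a + b) = s `^ a * s `^ b.
  by rewrite powRD // (gt_eqF s_gt0) implybT.
set t := s `^ (- (d%:R / p)).
have tE : t `^ (1 - p) * J / s ^+ d = t * J.
  have -> : t `^ (1 - p) = t * s ^+ d.
    by rewrite -powRrM -powR_mulrn ?ltW // -powRD_s; congr (s `^ _); field.
  by rewrite mulrAC mulfK // gt_eqF // exprn_gt0.
have := avg_le Q _ (powR_gt0 (- (d%:R / p)) s_gt0); rewrite -/t tE => avgQ.
apply: le_trans (ler_wpM2l (powR_ge0 _ _) avgQ) _.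
suff -> : s `^ alpha * (t + t * J) = (1 + J) * s `^ (alpha - d%:R / p) by [].
by rewrite powRD_s -/t; ring.
Qed.

Lemma scaled_avg_gt_gen_le (alpha eps : R) : alpha < d%:R / p -> 0 < eps ->
  exists N : int, forall P : dyadic d,
    eps < side P `^ alpha * avg mu f P -> P.1 <= N.
Proof.
move=> alpha_lt eps_gt0.
have b_lt0 : alpha - d%:R / p < 0 by rewrite subr_lt0.
set b := alpha - _ in b_lt0.
have c_gt0 : 0 < 1 + J.
  have := integral_ge0 mu (f := fun x => (`|f x| `^ p)%:E)
    (fun x (_ : setT x) => powR_ge0 `|f x| p).
  by rewrite int_powR_norm lee_fin => J0; rewrite ltr_pwDl.
set L := ln (eps / (1 + J)) / b.
set M := Num.Def.archi_bound (expR L).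
exists (Posz M) => P; apply: contraTT; rewrite -ltNge -leNgt => M_lt.
apply: le_trans (scaled_avg_le P alpha) _.
rewrite mulrC -ler_pdivlMr // /powR gt_eqF ?side_gt0 // -/b.
rewrite -[eps / _]lnK ?posrE ?divr_gt0 // ler_expR.
rewrite (_ : ln (eps / _) = b * L); last by rewrite /L [b * _]mulrC divfK ?ltr0_neq0.
rewrite ler_nM2l // -[L]expRK ler_ln ?posrE ?expR_gt0 ?side_gt0 //.
have [m Pm] : exists m : nat, P.1 = m%:Z.
  by exists `|P.1|%N; rewrite gez0_abs // (le_trans _ (ltW M_lt)).
move: M_lt; rewrite /side Pm -exprnP ltz_nat => M_lt.
apply: le_trans (ltW (archi_boundP (ltW (expR_gt0 L)))) _.
by rewrite -natrX ler_nat ltnW // (leq_ltn_trans (ltnW M_lt)) // ltn_expl.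
Qed.
End CubeAverages.

Lemma integral_powR_norm_fin {R : realType} {d : nat}
    {mu : {measure set (d.-tuple R) -> \bar R}} {f : d.-tuple R -> R} {p : R} :
  0 < p -> (Lnorm mu p%:E (EFin \o f) < +oo)%E ->
  exists J : R, (\int[mu]_x (`|f x| `^ p)%:E)%E = J%:E.
Proof.
move=> p_gt0; have := Lnorm_ge0 mu p%:E (EFin \o f).
case E : (Lnorm _ _ _) => [l||] // l_ge0 _; exists (l `^ p).
by rewrite -poweR_EFin -E poweR_Lnorm ?gt_eqF.
Qed.

Theorem lemma3p6 (R : realType) (d : nat)
  (mu : {measure set (d.-tuple R) -> \bar R}) (alpha p eps : R)
  (f : d.-tuple R -> R) :
  is_lebesgue mu ->
  0 < alpha -> alpha < d%:R ->
  1 <= p -> p < d%:R / alpha ->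
  measurable_fun setT f -> (Lnorm mu p%:E (EFin \o f) < +oo)%E ->
  0 < eps ->
  exists Qt : set (dyadic d),
    Qt `<=` Qalpha mu f alpha /\
    (forall Q : dyadic d, Qalpha mu f alpha Q ->
       eps < side Q `^ alpha * avg mu f Q ->
       exists2 P : dyadic d, Qt P &
         @cube R d Q `<=` cube (prt P) /\ avg mu f Q <= 2%:R ^+ d * avg mu f P) /\
    (forall Q P : dyadic d, Qt Q -> Qt P ->
       [\/ cube (prt Q) = cube (prt P) :> set (d.-tuple R),
           cube (prt Q) `&` cube (prt P) = set0 :> set (d.-tuple R)
         | ~ (2%:R ^- d < avg mu f Q / avg mu f P < 2%:R ^+ d)]).
Proof.
move=> mu_leb alpha_gt0 _ p_ge1 p_lt mf f_Lp eps_gt0.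
have p_gt0 : 0 < p := lt_le_trans ltr01 p_ge1.
have [J intJ] := integral_powR_norm_fin p_gt0 f_Lp.
have alpha_lt : alpha < d%:R / p by rewrite ltr_pdivlMr // mulrC -ltr_pdivlMr.
have [N genN] :=
  scaled_avg_gt_gen_le mu_leb mf p_ge1 intJ alpha eps alpha_lt eps_gt0.
pose S := [set Q | Qalpha mu f alpha Q /\ eps < side Q `^ alpha * avg mu f Q].
have avg_gt0 P : S P -> 0 < avg mu f P.
  move=> [_]; apply: contraTT; rewrite -!leNgt => avg_le0.
  by rewrite (le_trans _ (ltW eps_gt0)) // mulr_ge0_le0 // powR_ge0.
have gen_le P : S P -> P.1 <= N by move=> [_ /genN].
exists (selected S (avg mu f) N); split; first by move=> P [[]].
split => [Q QQ Qeps|Q P]; first exact: selected_cover.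
exact: selected_separated.
Qed.
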